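(* Let $n\ge1$ and $\alpha=\beta=1$. The stationary measure of the $n$-site open-boundary TASEP is given by $$\mathbb{P}^{\mathrm{st}}_n\{\mathcal{C}\}=\frac{|R^{-1}\{\mathcal{C}\}|}{|\mathcal{T}_n|}.$$ Equivalently, for every $\mathcal{C}\in\{\bullet,\circ\}^n$, $$|R^{-1}\{\mathcal{C}\}|\sum_{\mathcal{C}'}W(\mathcal{C}\to\mathcal{C}')=\sum_{\mathcal{C}'}|R^{-1}\{\mathcal{C}'\}|\,W(\mathcal{C}'\to\mathcal{C}).$$
   Context: Open-boundary TASEP on $n$ sites: this is the continuous-time Markov chain on $\{\bullet,\circ\}^n$ (strings of length $n$, where $\bullet$ denotes a particle and $\circ$ a hole). Its transition rates are as follows, with $\mathcal{A},\mathcal{A}'$ arbitrary strings: - $W(\circ\mathcal{A}\to\bullet\mathcal{A})=\alpha$; - $W(\mathcal{A}\bullet\to\mathcal{A}\circ)=\beta$; - $W(\mathcal{A}\bullet\circ\mathcal{A}'\to\mathcal{A}\circ\bullet\mathcal{A}')=1$; - $W(\mathcal{C}\to\mathcal{C}')=0$ for all other pairs. A plane binary tree is a finite rooted tree in which every vertex is either an endpoint (a leaf, with no children) or has exactly two children, an ordered left child and right child. Every non-root vertex is thus either a left descendent or a right descendent of its parent. The endpoints are ordered from left to right in the planar order. $\mathcal{T}_n$ denotes the set of plane binary trees with exactly $n+2$ endpoints. The reduced configuration of $T\in\mathcal{T}_n$ is $R(T)=(t_1,\dots,t_n)\in\{\bullet,\circ\}^n$. Here $t_k=\bullet$ if the $(k+1)$-th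 endpoint from the left is a left child, and $t_k=\circ$ if it is a right child. The leftmost and rightmost endpoints are ignored. *)

From mathcomp Require Import all_boot.
From Stdlib Require List.
Set Implicit Arguments. Unset Strict Implicit. Unset Printing Implicit Defensive.

(* Configurations: seq bool, true = particle (bullet), false = hole (circ). *)

Inductive ptree : Type := Leaf : ptree | Node : ptree -> ptree -> ptree.

Fixpoint nleaves (t : ptree) : nat :=
  match t with Leaf => 1 | Node l r => nleaves l + nleaves r end.

(* For a subtree whose root is a left child (d = true) or right child
   (d = false), the list, left to right, of the "is a left child" flags of its
   endpoints. *)
Fixpoint leaf_dirs (t : ptree) (d : bool) : seq bool :=
  match t with
  | Leaf => [:: d]
  | Node l r => leaf_dirs l true ++ leaf_dirs r false
  end.

(* Flags of all endpoints of a tree (root is not a child of anything; trees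
   considered here have a non-leaf root). *)
Definition endpoint_dirs (t : ptree) : seq bool :=
  match t with Leaf => [::] | Node l r => leaf_dirs l true ++ leaf_dirs r false end.

Definition redconf (t : ptree) : seq bool :=
  let s := endpoint_dirs t in take (size s).-2 (behead s).

Definition inT (n : nat) (t : ptree) : Prop := nleaves t = n.+2.

Definition enumerates (P : ptree -> Prop) (l : list ptree) : Prop :=
  List.NoDup l /\ (forall t, List.In t l <-> P t).

(* TASEP transitions with alpha = beta = 1: list of configurations reachable
   from C by one move (each move has rate 1). *)
Definition entry_moves (C : seq bool) : seq (seq bool) :=
  if C is false :: A then [:: true :: A] else [::].

Definition exit_moves (C : seq bool) : seq (seq bool) :=
  if (size C > 0) && last false C then [:: set_nth false C (size C).-1 false]
  else [::].

Definition hop_moves (C : seq bool) : seq (seq bool) :=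
  [seq set_nth false (set_nth false C i false) i.+1 true
     | i <- iota 0 (size C).-1 & nth false C i && ~~ nth false C i.+1].

Definition moves (C : seq bool) : seq (seq bool) :=
  entry_moves C ++ exit_moves C ++ hop_moves C.

(* Transition rate W(C -> C') for alpha = beta = 1 (distinct moves give
   distinct targets, and no move fixes C). *)
Definition W (C C' : seq bool) : nat := (C' \in moves C).

From HB Require Import structures.
From mathcomp Require Import all_boot zify.
From Stdlib Require List.
Set Implicit Arguments. Unset Strict Implicit. Unset Printing Implicit Defensive.

(* Read a tree through the left/right flags of its endpoints: the trees with
   reduced configuration c are those whose flag word is  • c ○ , so their
   number [weight c] satisfies the matrix-ansatz relations for alpha = beta = 1,
     weight (u •○ v) = weight (u • v) + weight (u ○ v),
     weight (○ v) = weight v,    weight (u •) = weight u.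
   The first holds because endpoints flagged •○ next to each other are sibling
   leaves, and contracting them to one leaf flagged • or ○ is a bijection (the
   tree •○ itself being the only exception); here it is proved by induction
   along the decomposition at the root.  The other two hold because the first
   endpoint of a left subtree is a left child and the last endpoint of a right
   subtree is a right child.  Any weight obeying these relations is stationary:
   the first relation balances the flows through each bond up to terms that
   telescope along the chain, and the other two match the boundary terms. *)

Fixpoint ptree_eqb (s t : ptree) : bool :=
  match s, t with
  | Leaf, Leaf => true
  | Node a b, Node c d => ptree_eqb a c && ptree_eqb b d
  | _, _ => false
  end.

Lemma ptree_eqP : Equality.axiom ptree_eqb.
Proof.
elim=> [|a IHa b IHb] [|c d] /=; try by constructor.
by apply: (iffP andP) => [[/IHa -> /IHb ->]|[<- <-]]; split; [apply/IHa|apply/IHb].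
Qed.

HB.instance Definition _ := hasDecEq.Build ptree ptree_eqP.

Lemma leaf_dirs_neq0 t d : leaf_dirs t d != [::].
Proof. by elim: t d => [|l IHl r IHr] d //=; case: (leaf_dirs l true) (IHl true). Qed.

Lemma size_leaf_dirs t d : size (leaf_dirs t d) = nleaves t.
Proof. by elim: t d => [|l IHl r IHr] d //=; rewrite size_cat IHl IHr. Qed.

Lemma head_leaf_dirs t : head false (leaf_dirs t true) = true.
Proof.
elim: t => [|l IHl r _] //=.
by case: (leaf_dirs l true) (leaf_dirs_neq0 l true) IHl.
Qed.

Lemma last_leaf_dirs t : last false (leaf_dirs t false) = false.
Proof.
elim: t => [|l _ r IHr] //=; rewrite last_cat.
by case: (leaf_dirs r false) (leaf_dirs_neq0 r false) IHr.
Qed.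

(* The trees of height less than [k] whose endpoint flags read [w], the root
   being flagged [d]; height [size w] suffices, see [mem_trees_dirs]. *)
Fixpoint trees_dirs (k : nat) (d : bool) (w : seq bool) : seq ptree :=
  if k is k'.+1 then
    (if w == [:: d] then [:: Leaf] else [::]) ++
    [seq Node lr.1 lr.2 | i <- iota 1 (size w).-1,
       lr <- [seq (l, r) | l <- trees_dirs k' true (take i w),
                           r <- trees_dirs k' false (drop i w)]]
  else [::].

Lemma trees_dirs_sound k d w t : t \in trees_dirs k d w -> leaf_dirs t d = w.
Proof.
elim: k d w t => [|k IH] d w t //=; rewrite mem_cat => /orP[].
  by case: eqP => // -> /[1!inE] /eqP ->.
case/allpairsPdep=> i [_ [_ /allpairsP[[l r] /= [/IH hl /IH hr ->]] ->]] /=.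
by rewrite hl hr cat_take_drop.
Qed.

Lemma trees_dirs_complete k d w t :
  size w <= k -> leaf_dirs t d = w -> t \in trees_dirs k d w.
Proof.
elim: k d w t => [|k IH] d w t le_wk ew; subst w.
  by move: le_wk; rewrite leqn0 size_eq0 (negbTE (leaf_dirs_neq0 _ _)).
case: t le_wk => [|l r] /= le_wk; rewrite mem_cat; first by rewrite eqxx mem_head.
have sl : 0 < size (leaf_dirs l true) by rewrite lt0n size_eq0 leaf_dirs_neq0.
have sr : 0 < size (leaf_dirs r false) by rewrite lt0n size_eq0 leaf_dirs_neq0.
rewrite size_cat in le_wk.
apply/orP; right; apply/allpairsPdep; exists (size (leaf_dirs l true)), (l, r).
split=> //; first by rewrite mem_iota size_cat; lia.
apply/allpairsP; exists (l, r); rewrite take_size_cat ?drop_size_cat //.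
by split=> //; apply: IH => //; lia.
Qed.

Lemma mem_trees_dirs k d w t :
  size w <= k -> (t \in trees_dirs k d w) = (leaf_dirs t d == w).
Proof.
move=> le_wk; apply/idP/eqP; first exact: trees_dirs_sound.
exact: trees_dirs_complete.
Qed.

Lemma trees_dirs_uniq k d w : uniq (trees_dirs k d w).
Proof.
elim: k d w => [|k IH] d w //=; rewrite cat_uniq; apply/and3P; split.
- by case: eqP.
- by apply/hasPn => t /allpairsPdep[i [[l r] [_ _ ->]]]; case: eqP.
apply: allpairs_uniq_dep => [|i _|]; rewrite ?iota_uniq //.
  by apply: allpairs_uniq => // [[? ?] [? ?] _ _ /= [-> ->]].
move=> p q /allpairsPdep[i [lr [hi /allpairsP[[l r] [/trees_dirs_sound hl _ ->]] ->]]].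
move=> /allpairsPdep[j [lr' [hj /allpairsP[[l' r'] [/trees_dirs_sound hl' _ ->]] ->]]].
move=> /= [el er]; subst l' r'.
suff -> : i = j by [].
move: hi hj (congr1 size hl'); rewrite /= hl !mem_iota !size_take_min.
by case: (size w) => [|m] /=; lia.
Qed.

Definition ntrees (d : bool) (w : seq bool) : nat := size (trees_dirs (size w) d w).

Definition ntrees_node (w : seq bool) : nat :=
  \sum_(1 <= i < size w) ntrees true (take i w) * ntrees false (drop i w).

Lemma size_trees_dirs k d w : size w <= k -> size (trees_dirs k d w) = ntrees d w.
Proof.
move=> le_wk; apply/perm_size/uniq_perm; rewrite ?trees_dirs_uniq // => t.
by rewrite !mem_trees_dirs.
Qed.

Lemma ntrees_eq0 d w : (forall t, leaf_dirs t d != w) -> ntrees d w = 0.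
Proof.
move=> ne_w; rewrite /ntrees.
case: (trees_dirs _ d w) (@trees_dirs_sound (size w) d w) => [|t s] // /(_ t).
by rewrite mem_head => /(_ isT) /eqP; rewrite (negbTE (ne_w t)).
Qed.

Lemma ntrees_rec d w : ntrees d w = (w == [:: d]) + ntrees_node w.
Proof.
rewrite /ntrees /ntrees_node; case E: (size w) => [|k].
  by move/eqP: E; rewrite size_eq0 => /eqP ->; rewrite big_geq.
rewrite /= size_cat; congr (_ + _); first by case: eqP.
rewrite size_allpairs_dep sumnE big_map /index_iota subn1 E /= !big_seq.
apply: eq_bigr => i; rewrite mem_iota => lt_ik.
rewrite size_allpairs !size_trees_dirs // ?size_take_min ?size_drop E; lia.
Qed.

Lemma ntrees_true_false_head x : ntrees true (false :: x) = 0.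
Proof. by apply: ntrees_eq0 => t; apply/eqP => e; have := head_leaf_dirs t; rewrite e. Qed.

Lemma ntrees_false_true_last x : ntrees false (rcons x true) = 0.
Proof.
by apply: ntrees_eq0 => t; apply/eqP => e; have := last_leaf_dirs t; rewrite e last_rcons.
Qed.

Lemma ntrees_node_false_head x : ntrees_node (false :: x) = 0.
Proof.
rewrite /ntrees_node big_nat big1 // => -[|i] //= _.
by rewrite ntrees_true_false_head.
Qed.

Lemma ntrees_node_true_last x : ntrees_node (rcons x true) = 0.
Proof.
rewrite /ntrees_node big_nat big1 // => i /[!size_rcons] /andP[_ le_ix].
by rewrite drop_rcons // ntrees_false_true_last muln0.
Qed.

Lemma ntrees_true_last u : ntrees true (rcons u true) = (u == [::]).
Proof.
rewrite ntrees_rec ntrees_node_true_last addn0.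
by rewrite -[[:: true]]/(rcons [::] true) eqseq_rcons eqxx andbT.
Qed.

Lemma ntrees_false_head v : ntrees false (false :: v) = (v == [::]).
Proof. by rewrite ntrees_rec ntrees_node_false_head addn0; case: v. Qed.

Lemma ntrees_node_cat_cons x c y :
  ntrees_node (x ++ c :: y) =
  \sum_(1 <= i < (size x).+1) ntrees true (take i x) * ntrees false (drop i x ++ c :: y) +
  \sum_(0 <= j < size y) ntrees true (x ++ c :: take j y) * ntrees false (drop j y).
Proof.
rewrite /ntrees_node size_cat /= (@big_cat_nat _ _ _ (size x).+1) //; last by lia.
congr (_ + _).
  apply: eq_big_nat => i /andP[_ le_ix].
  rewrite take_cat drop_cat; rewrite ltnS leq_eqVlt in le_ix.
  case/orP: le_ix => [/eqP ->|->] //.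
  by rewrite ltnn subnn take0 cats0 take_size drop_size.
rewrite -{1}[(size x).+1]add0n big_addn.
have -> : size x + (size y).+1 - (size x).+1 = size y by lia.
apply: eq_big_nat => j _; rewrite addnS -addSn take_cat drop_cat ltnNge leq_addl /=.
by rewrite addnK.
Qed.

Lemma ntrees_TF_of_node u v :
  ntrees_node (u ++ true :: false :: v) =
    ((u == [::]) && (v == [::])) + ntrees_node (u ++ true :: v) + ntrees_node (u ++ false :: v) ->
  forall d, ntrees d (u ++ true :: false :: v) =
            ntrees d (u ++ true :: v) + ntrees d (u ++ false :: v).
Proof.
move=> node_TF d; rewrite !ntrees_rec node_TF.
have no_singleton s : 1 < size s -> (s == [:: d]) = false.
  by case: s => [|? [|? ?]] //= _; rewrite eqseq_cons andbF.
rewrite no_singleton ?size_cat ?addnS //.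
case: u {node_TF} => [|a u]; last by rewrite !no_singleton //= size_cat addnS.
by case: v => [|b v]; [case: d no_singleton | rewrite !no_singleton]; rewrite /=; lia.
Qed.

Lemma ntrees_node_TF u v :
  ntrees_node (u ++ true :: false :: v) =
    ((u == [::]) && (v == [::])) + ntrees_node (u ++ true :: v) + ntrees_node (u ++ false :: v).
Proof.
have [m] := ubnP (size u + size v); elim: m u v => // m IH u v lt_uv_m.
have TF u' v' d : size u' + size v' < size u + size v ->
    ntrees d (u' ++ true :: false :: v') =
    ntrees d (u' ++ true :: v') + ntrees d (u' ++ false :: v').
  by move=> lt_uv; apply: ntrees_TF_of_node; apply: IH; lia.
rewrite !ntrees_node_cat_cons -[size (false :: v)]/((size v).+1) [X in _ + X = _]big_nat_recl //.
rewrite take0 drop0 cats1 ntrees_true_last ntrees_false_head mulnb.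
under eq_big_nat => i /andP[lt0i le_iu] do
  [rewrite TF ?mulnDr; last by rewrite size_drop; lia].
under [in X in _ + (_ + X) = _]eq_big_nat => j /andP[_ lt_jv] do
  [rewrite /= TF ?mulnDl; last by rewrite size_take_min; lia].
rewrite !big_split /=; lia.
Qed.

Lemma ntrees_TF d u v :
  ntrees d (u ++ true :: false :: v) = ntrees d (u ++ true :: v) + ntrees d (u ++ false :: v).
Proof. exact/ntrees_TF_of_node/ntrees_node_TF. Qed.

Definition weight (c : seq bool) : nat := ntrees false (true :: rcons c false).

Lemma weight_TF u v :
  weight (u ++ true :: false :: v) = weight (u ++ true :: v) + weight (u ++ false :: v).
Proof. by rewrite /weight !rcons_cat; apply: (ntrees_TF false (true :: u)). Qed.

Lemma weight_F v : weight (false :: v) = weight v.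
Proof.
rewrite /weight (ntrees_TF false [::]) ntrees_false_head.
by case: v => [|? ?]; rewrite addn0.
Qed.

Lemma weight_T u : weight (rcons u true) = weight u.
Proof.
rewrite /weight.
have -> : true :: rcons (rcons u true) false = (true :: u) ++ [:: true, false & [::]].
  by rewrite -!cats1 -catA.
by rewrite ntrees_TF !cats1 ntrees_false_true_last.
Qed.

Lemma fiber_leaf_dirs n (c : seq bool) t : size c = n ->
  (inT n t /\ redconf t = c) <-> leaf_dirs t false = true :: rcons c false.
Proof.
move=> size_c; rewrite /inT -(size_leaf_dirs t false).
case: t => [|l r]; first by split=> [[/= /eqP //]|[]].
rewrite /redconf /endpoint_dirs /=; set w := leaf_dirs l true ++ leaf_dirs r false.
have head_w : head false w = true.
  by rewrite /w; case: (leaf_dirs l true) (leaf_dirs_neq0 l true) (head_leaf_dirs l).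
have last_w : last false w = false.
  by rewrite /w last_cat; case: (leaf_dirs r false) (leaf_dirs_neq0 r false) (last_leaf_dirs r).
split=> [[size_w]|->]; last by rewrite /= size_rcons size_c -cats1 take_size_cat.
case: w head_w last_w size_w => [|x s] //= -> last_s [size_s].
case/lastP: s last_s size_s => [|s y] //; rewrite last_rcons size_rcons => -> [size_s].
by rewrite -cats1 take_size_cat // => <-; rewrite cats1.
Qed.

Lemma In_mem (T : eqType) (x : T) (s : seq T) : List.In x s <-> x \in s.
Proof.
elim: s => [|y s IH] //=; rewrite inE.
by split=> [[->|/IH ->]|/orP[/eqP->|/IH]]; rewrite ?eqxx ?orbT; auto.
Qed.

Lemma NoDup_uniq (T : eqType) (s : seq T) : List.NoDup s -> uniq s.
Proof.
elim: s => [|x s IH] //= /List.NoDup_cons_iff[x_notin_s /IH ->].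
by rewrite andbT; apply/negP => /In_mem.
Qed.

Lemma length_fiber n (c : seq bool) (l : list ptree) : size c = n ->
  enumerates (fun t => inT n t /\ redconf t = c) l -> List.length l = weight c.
Proof.
move=> size_c [/NoDup_uniq uniq_l mem_l].
have -> : List.length l = size l by elim: l {uniq_l mem_l} => //= ? ? ->.
apply/perm_size/uniq_perm; rewrite ?trees_dirs_uniq // => t.
rewrite mem_trees_dirs //; apply/idP/eqP => [/In_mem/mem_l|].
  by move/(fiber_leaf_dirs _ size_c).
by move/(fiber_leaf_dirs _ size_c)/mem_l/In_mem.
Qed.

Definition set2 (c : seq bool) (i : nat) (a b : bool) : seq bool :=
  set_nth false (set_nth false c i a) i.+1 b.

Definition rem_nth (c : seq bool) (i : nat) : seq bool := take i c ++ drop i.+1 c.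

Lemma nth_size_cat (u s : seq bool) x : nth false (u ++ x :: s) (size u) = x.
Proof. by rewrite nth_cat ltnn subnn. Qed.

Lemma nth_size_cat2 (u s : seq bool) x y : nth false (u ++ [:: x, y & s]) (size u).+1 = y.
Proof. by rewrite -cat_rcons -(size_rcons u x) nth_size_cat. Qed.

Lemma set_nth_size_cat (u s : seq bool) x b :
  set_nth false (u ++ x :: s) (size u) b = u ++ b :: s.
Proof. by elim: u => //= a u ->. Qed.

Lemma set2_size_cat (u s : seq bool) x y a b :
  set2 (u ++ [:: x, y & s]) (size u) a b = u ++ [:: a, b & s].
Proof.
by rewrite /set2 set_nth_size_cat -cat_rcons -(size_rcons u a) set_nth_size_cat cat_rcons.
Qed.

Lemma rem_nth_size_cat (u s : seq bool) x : rem_nth (u ++ x :: s) (size u) = u ++ s.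
Proof. by rewrite /rem_nth take_size_cat // -cat_rcons drop_size_cat ?size_rcons. Qed.

Lemma size_set_nth_lt (c : seq bool) i b : i < size c -> size (set_nth false c i b) = size c.
Proof. by move=> lt_ic; rewrite size_set_nth; apply/maxn_idPr. Qed.

Lemma size_set2 (c : seq bool) i a b : i.+1 < size c -> size (set2 c i a b) = size c.
Proof. by move=> lt_ic; rewrite !size_set_nth_lt // ?size_set_nth_lt //; lia. Qed.

Lemma split_at2 (c : seq bool) i : i.+1 < size c ->
  exists u x y s, c = u ++ [:: x, y & s] /\ size u = i.
Proof.
move=> lt_ic; exists (take i c), (nth false c i), (nth false c i.+1), (drop i.+2 c).
by rewrite -!drop_nth ?cat_take_drop ?size_takel //; lia.
Qed.

Lemma nth_set2 (c : seq bool) i a b k :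
  nth false (set2 c i a b) k = if k == i.+1 then b else if k == i then a else nth false c k.
Proof. by rewrite /set2 nth_set_nth /= nth_set_nth. Qed.

Lemma count_sum (T : Type) (p : pred T) (s : seq T) : count p s = \sum_(x <- s) p x.
Proof. by rewrite -sumn_count sumnE big_map. Qed.

Lemma mem_exit_moves c t : t \in exit_moves c ->
  [/\ 0 < size c, last false c & t = set_nth false c (size c).-1 false].
Proof. by rewrite /exit_moves; case: ifP => // /andP[? ?] /[1!inE] /eqP. Qed.

Lemma mem_hop_moves c t : t \in hop_moves c ->
  exists2 i, i.+1 < size c & [/\ nth false c i, ~~ nth false c i.+1 & t = set2 c i false true].
Proof.
case/mapP=> i /[!mem_filter] /andP[/andP[ci cSi] /[!mem_iota] lt_ic] ->.
by exists i => //; move: lt_ic; rewrite add0n; case: (size c).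
Qed.

Lemma moves_uniq c : uniq (moves c).
Proof.
rewrite /moves !cat_uniq; apply/and5P; split.
- by case: c => [|[] ?].
- case: c => [|[] s] //; apply/hasPn => t /[!mem_cat] t_in //.
  rewrite /= inE; apply/negP => /eqP et.
  case/orP: t_in => [/mem_exit_moves[_ _]|/mem_hop_moves[i _ [_ _]]] /(congr1 (nth false ^~ 0));
    rewrite et.
  + by rewrite nth_set_nth /=; case: (size s).
  + by rewrite nth_set2; case: i.
- by rewrite /exit_moves; case: ifP.
- apply/hasPn => t /mem_hop_moves[i lt_ic [_ _ ->]]; apply/negP.
  case/mem_exit_moves=> _ lastc /(congr1 (nth false ^~ (size c).-1)).
  rewrite nth_set2 nth_set_nth /= eqxx nth_last lastc.
  by case: eqP => [|_]; [lia | case: eqP => //; lia].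
rewrite map_inj_in_uniq ?filter_uniq ?iota_uniq // => i j.
rewrite !mem_filter => /andP[/andP[ci _] _] _ /(congr1 (nth false ^~ i)).
rewrite !nth_set2 eqxx (ltn_eqF (ltnSn i)) ci.
by case: eqP => //; case: eqP.
Qed.

Lemma W_from c c' : 0 < size c ->
  W c c' = (~~ head false c && (c' == set_nth false c 0 true))
         + (last false c && (c' == set_nth false c (size c).-1 false))
         + \sum_(0 <= i < (size c).-1)
              (nth false c i && ~~ nth false c i.+1 && (c' == set2 c i false true)).
Proof.
move=> lt0c; rewrite /W -count_uniq_mem ?moves_uniq // /moves !count_cat addnA.
congr (_ + _ + _).
- by case: c lt0c => [|[] s] //=; rewrite addn0 eq_sym.
- by rewrite /exit_moves lt0c; case: (last false c) => //=; rewrite addn0 eq_sym.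
rewrite /hop_moves count_map count_filter count_sum /index_iota subn0.
by apply: eq_bigr => i _; rewrite andbC eq_sym.
Qed.

Lemma entry_move_eq (c c' : seq bool) : size c' = size c -> 0 < size c ->
  (~~ head false c' && (c == set_nth false c' 0 true)) =
  head false c && (c' == set_nth false c 0 false).
Proof. by case: c' => [|[] s'] //; case: c => [|[] s] //= _ _; rewrite eq_sym. Qed.

Lemma exit_move_eq (c c' : seq bool) : size c' = size c -> 0 < size c ->
  (last false c' && (c == set_nth false c' (size c).-1 false)) =
  ~~ last false c && (c' == set_nth false c (size c).-1 true).
Proof.
case/lastP: c' => [|s' x']; first by move=> <-.
case/lastP: c => [|s x] //; rewrite !size_rcons => -[e] _ /=.
rewrite !last_rcons -!cats1 -{1}e !set_nth_size_cat !eqseq_cat //.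
by case: x; case: x'; rewrite /= ?andbF ?andbT // eq_sym.
Qed.

Lemma hop_move_eq (c c' : seq bool) i : size c' = size c -> i.+1 < size c ->
  (nth false c' i && ~~ nth false c' i.+1 && (c == set2 c' i false true)) =
  (~~ nth false c i && nth false c i.+1 && (c' == set2 c i true false)).
Proof.
move=> e lt_ic; have lt_ic' : i.+1 < size c' by rewrite e.
have [u [x [y [s [-> ei]]]]] := split_at2 lt_ic.
have [u' [x' [y' [s' [-> ei']]]]] := split_at2 lt_ic'.
rewrite -[in LHS]ei' -[in RHS]ei !nth_size_cat !nth_size_cat2 !set2_size_cat.
rewrite !eqseq_cat ?ei ?ei' // !eqseq_cons.
by case: x; case: y; case: x'; case: y'; rewrite /= ?andbF ?andbT // (eq_sym u) (eq_sym s).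
Qed.

Lemma W_into c c' : size c' = size c -> 0 < size c ->
  W c' c = (head false c && (c' == set_nth false c 0 false))
         + (~~ last false c && (c' == set_nth false c (size c).-1 true))
         + \sum_(0 <= i < (size c).-1)
              (~~ nth false c i && nth false c i.+1 && (c' == set2 c i true false)).
Proof.
move=> e lt0c; rewrite W_from ?e // entry_move_eq ?exit_move_eq //.
by congr (_ + _); apply: eq_big_nat => i lt_i; rewrite hop_move_eq //; lia.
Qed.

Lemma sum_tuple_pick n (F : seq bool -> nat) b (y : seq bool) : size y = n ->
  \sum_(C : n.-tuple bool) F C * (b && (tval C == y)) = b * F y.
Proof.
move=> size_y; have yn : size y == n by apply/eqP.
rewrite (bigD1 (Tuple yn)) //= eqxx andbT big1 ?addn0 => [|C neC]; first by rewrite mulnC.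
by case: eqP => [eCy|]; rewrite ?andbF ?muln0 //; case/eqP: neC; apply: val_inj.
Qed.

Lemma sum_W_out n (c : n.-tuple bool) : 0 < n ->
  \sum_(C' : n.-tuple bool) W c C' =
    ~~ head false c + last false c + \sum_(0 <= i < n.-1) (nth false c i && ~~ nth false c i.+1).
Proof.
move=> lt0n; have size_c : size c = n := size_tuple c.
have pick b y : size y = n -> \sum_(C' : n.-tuple bool) (b && (tval C' == y)) = b.
  move=> /(sum_tuple_pick (fun=> 1) b); rewrite muln1 => <-.
  by apply: eq_bigr => C' _; rewrite mul1n.
under [in LHS]eq_bigr => C' _ do rewrite W_from ?size_c //.
rewrite !big_split /= exchange_big /= !pick ?size_set_nth_lt ?size_c //; try lia.
by congr (_ + _); apply: eq_big_nat => i lt_i; rewrite pick // size_set2 ?size_c //; lia.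
Qed.

Lemma sum_W_in n (c : n.-tuple bool) (F : seq bool -> nat) : 0 < n ->
  \sum_(C' : n.-tuple bool) F C' * W C' c =
    head false c * F (set_nth false c 0 false) + ~~ last false c * F (set_nth false c n.-1 true)
    + \sum_(0 <= i < n.-1) (~~ nth false c i && nth false c i.+1) * F (set2 c i true false).
Proof.
move=> lt0n; have size_c : size c = n := size_tuple c.
under [in LHS]eq_bigr => C' _ do rewrite W_into ?size_tuple ?size_c // !mulnDr big_distrr.
rewrite !big_split /= exchange_big /= !sum_tuple_pick ?size_set_nth_lt ?size_c //; try lia.
congr (_ + _); apply: eq_big_nat => i lt_i.
by rewrite sum_tuple_pick // size_set2 ?size_c //; lia.
Qed.

Lemma telescope_balance (p q e f : nat -> nat) m :
  (forall i, i < m -> e i + p i + q i.+1 = f i + q i + p i.+1) ->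
  p 0 + q m + \sum_(0 <= i < m) e i = q 0 + p m + \sum_(0 <= i < m) f i.
Proof.
elim: m => [|m IH] bond; first by rewrite !big_geq //; lia.
have := IH (fun i lt_im => bond i (ltnW lt_im)); have := bond m (ltnSn m).
rewrite !big_nat_recr //=; lia.
Qed.

Section MatrixAnsatz.

Variable G : seq bool -> nat.
Hypothesis G_TF :
  forall u v, G (u ++ true :: false :: v) = G (u ++ true :: v) + G (u ++ false :: v).
Hypothesis G_F : forall v, G (false :: v) = G v.
Hypothesis G_T : forall u, G (rcons u true) = G u.

Lemma ansatz_bond c i : i.+1 < size c ->
  (~~ nth false c i && nth false c i.+1) * G (set2 c i true false)
    + nth false c i * G (rem_nth c i) + ~~ nth false c i.+1 * G (rem_nth c i.+1) =
  G c * (nth false c i && ~~ nth false c i.+1)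
    + ~~ nth false c i * G (rem_nth c i) + nth false c i.+1 * G (rem_nth c i.+1).
Proof.
move=> lt_ic; have [u [x [y [s [-> <-]]]]] := split_at2 lt_ic.
have -> : rem_nth (u ++ [:: x, y & s]) (size u).+1 = u ++ x :: s.
  by rewrite -cat_rcons -(size_rcons u x) rem_nth_size_cat cat_rcons.
rewrite nth_size_cat nth_size_cat2 set2_size_cat rem_nth_size_cat.
by case: x; case: y; rewrite /= ?G_TF; lia.
Qed.

Lemma ansatz_balance c : 0 < size c ->
  G c * (~~ head false c + last false c
         + \sum_(0 <= i < (size c).-1) (nth false c i && ~~ nth false c i.+1)) =
  head false c * G (set_nth false c 0 false)
  + ~~ last false c * G (set_nth false c (size c).-1 true)
  + \sum_(0 <= i < (size c).-1) (~~ nth false c i && nth false c i.+1) * G (set2 c i true false).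
Proof.
move=> lt0c.
have [head_out head_in] : G c * ~~ head false c = ~~ nth false c 0 * G (rem_nth c 0) /\
    head false c * G (set_nth false c 0 false) = nth false c 0 * G (rem_nth c 0).
  by case: c lt0c => [|[] s] // _; rewrite /rem_nth /= drop0 G_F; lia.
have [last_out last_in] :
    G c * last false c = nth false c (size c).-1 * G (rem_nth c (size c).-1) /\
    ~~ last false c * G (set_nth false c (size c).-1 true) =
    ~~ nth false c (size c).-1 * G (rem_nth c (size c).-1).
  case/lastP: c lt0c {head_out head_in} => [|s x] // _; rewrite size_rcons /= last_rcons -cats1.
  rewrite nth_size_cat set_nth_size_cat rem_nth_size_cat cats0 !cats1 G_T.
  by case: x; rewrite ?G_T; lia.
rewrite !mulnDr big_distrr /= head_out head_in last_out last_in.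
symmetry; apply: (@telescope_balance (fun i => nth false c i * G (rem_nth c i))
  (fun i => ~~ nth false c i * G (rem_nth c i))
  (fun i => (~~ nth false c i && nth false c i.+1) * G (set2 c i true false))
  (fun i => G c * (nth false c i && ~~ nth false c i.+1))) => i lt_i.
by apply: ansatz_bond; lia.
Qed.

Lemma ansatz_stationary n (c : n.-tuple bool) : 0 < n ->
  G c * \sum_(C' : n.-tuple bool) W c C' = \sum_(C' : n.-tuple bool) G C' * W C' c.
Proof.
move=> lt0n; rewrite sum_W_out // sum_W_in //.
by have := ansatz_balance (c := tval c); rewrite size_tuple; apply.
Qed.

End MatrixAnsatz.

Theorem proposition2 (n : nat) (hn : 1 <= n)
  (fib : n.-tuple bool -> list ptree)
  (hfib : forall C : n.-tuple bool,
            enumerates (fun t => inT n t /\ redconf t = tval C) (fib C))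
  (C : n.-tuple bool) :
  (List.length (fib C) * \sum_(C' : n.-tuple bool) W (tval C) (tval C'))%N =
  (\sum_(C' : n.-tuple bool) List.length (fib C') * W (tval C') (tval C))%N.
Proof.
have fiber C' : List.length (fib C') = weight C' := length_fiber (size_tuple C') (hfib C').
under [in RHS]eq_bigr => C' _ do rewrite fiber.
by rewrite fiber; apply: (ansatz_stationary weight_TF weight_F weight_T).
Qed.
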